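(* Let $W$ be a normal PO-dilator, $X$ a partial order, $(Z,\iota,\kappa)$ an initial Kruskal fixed point of $W$ over $X$, and $(Z',\iota',\kappa')$ another Kruskal fixed point of $W$ over $X$. Let $f:Z\to Z'$ be the unique quasi embedding with $f\circ\iota=\iota'$ and $f\circ\kappa=\kappa'\circ W(f)$. If $x\leq_X y$ implies $\iota'(x)\leq_{Z'}\iota'(y)$ for all $x,y\in X$, then $f$ is an embedding.
   Context: A quasi embedding between partial orders $X,Y$ is a function $f$ with $f(x)\leq_Y f(y)\Rightarrow x\leq_X y$; an embedding also satisfies the converse. $\mathrm{PO}$ is the category of partial orders and quasi embeddings. $[X]^{<\omega}$ denotes the finite subsets of $X$, with $[f]^{<\omega}(a)=\{f(x)\mid x\in a\}$. A PO-dilator is a functor $W:\mathrm{PO}\to\mathrm{PO}$ mapping embeddings to embeddings, with a natural transformation $\operatorname{supp}^W:W\Rightarrow[\cdot]^{<\omega}$ such that for every embedding $f:X\to Y$, $\operatorname{rng}(W(f))=\{\sigma\in W(Y)\mid\operatorname{supp}^W_Y(\sigma)\subseteq\operatorname{rng}(f)\}$. For finite $a,b\subseteq X$, $a\leq^{\mathrm{fin}}_X b$ iff every $x\in a$ has some $y\in b$ with $x\leq_X y$ ($z\leq^{\mathrm{fin}}_X b$ means $\{z\}\leq^{\mathrm{fin}}_X b$). $W$ is normal if $\sigma\leq_{W(X)}\tau$ implies $\operatorname{supp}^W_X(\sigma)\leq^{\mathrm{fin}}_X\operatorname{supp}^W_X(\tau)$. A Kruskal fixed point of $W$ over $X$ is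 a partial order $Z$ with functions $\iota:X\to Z$, $\kappa:W(Z)\to Z$ such that $\operatorname{rng}(\iota)\cap\operatorname{rng}(\kappa)=\emptyset$ and, for all $x,y\in X$ and $\sigma,\tau\in W(Z)$: $\iota(x)\leq_Z\iota(y)\Rightarrow x\leq_X y$; $\iota(x)\leq_Z\kappa(\tau)$ iff $\iota(x)\leq^{\mathrm{fin}}_Z\operatorname{supp}^W_Z(\tau)$; $\kappa(\sigma)\not\leq_Z\iota(y)$; $\kappa(\sigma)\leq_Z\kappa(\tau)$ iff ($\sigma\leq_{W(Z)}\tau$ or $\kappa(\sigma)\leq^{\mathrm{fin}}_Z\operatorname{supp}^W_Z(\tau)$). It is initial if for every Kruskal fixed point $(Z',\iota',\kappa')$ of $W$ over $X$ there is a unique quasi embedding $f:Z\to Z'$ with $f\circ\iota=\iota'$ and $f\circ\kappa=\kappa'\circ W(f)$. *)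

From Stdlib Require Import List.

Record PO : Type := {
  carrier :> Type;
  le : carrier -> carrier -> Prop;
  le_refl : forall x, le x x;
  le_antisym : forall x y, le x y -> le y x -> x = y;
  le_trans : forall x y z, le x y -> le y z -> le x z
}.
Arguments le {p} _ _.

Definition quasi_emb {X Y : PO} (f : X -> Y) : Prop :=
  forall x y : X, le (f x) (f y) -> le x y.

Definition emb {X Y : PO} (f : X -> Y) : Prop :=
  forall x y : X, le (f x) (f y) <-> le x y.

(* Morphisms of the category PO: quasi embeddings *)
Record qemb (X Y : PO) : Type := { qfun :> X -> Y; qfun_qe : quasi_emb qfun }.
Arguments qfun {X Y} _ _.

Definition qid (X : PO) : qemb X X :=
  {| qfun := fun x => x; qfun_qe := fun x y h => h |}.

Definition qcomp {X Y Z : PO} (g : qemb Y Z) (f : qemb X Y) : qemb X Z.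
Proof.
  refine {| qfun := fun x => g (f x) |}.
  intros x y h. apply (qfun_qe _ _ f), (qfun_qe _ _ g), h.
Defined.

Definition finite_set {X : Type} (a : X -> Prop) : Prop :=
  exists l : list X, forall x, a x -> In x l.

Definition le_fin {X : PO} (a b : X -> Prop) : Prop :=
  forall x, a x -> exists y, b y /\ le x y.

Definition le_fin1 {X : PO} (z : X) (b : X -> Prop) : Prop :=
  le_fin (fun x => x = z) b.

Record PO_dilator : Type := {
  Wobj : PO -> PO;
  Wmap : forall X Y : PO, qemb X Y -> Wobj X -> Wobj Y;
  Wmap_qe : forall X Y (f : qemb X Y), quasi_emb (Wmap X Y f);
  Wmap_id : forall X (s : Wobj X), Wmap X X (qid X) s = s;
  Wmap_comp : forall X Y Z (g : qemb Y Z) (f : qemb X Y) (s : Wobj X),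
      Wmap X Z (qcomp g f) s = Wmap Y Z g (Wmap X Y f s);
  Wmap_emb : forall X Y (f : qemb X Y), emb f -> emb (Wmap X Y f);
  (* support: a natural transformation W => [.]^{<omega} *)
  supp : forall X : PO, Wobj X -> (X -> Prop);
  supp_finite : forall X (s : Wobj X), finite_set (supp X s);
  supp_natural : forall X Y (f : qemb X Y) (s : Wobj X) (y : Y),
      supp Y (Wmap X Y f s) y <-> exists x, supp X s x /\ f x = y;
  supp_range : forall X Y (f : qemb X Y), emb f ->
      forall t : Wobj Y,
        (exists s : Wobj X, Wmap X Y f s = t) <->
        (forall y, supp Y t y -> exists x, f x = y)
}.
Arguments Wmap p {X Y} _ _.
Arguments supp p {X} _ _.

Definition normal (W : PO_dilator) : Prop :=
  forall (X : PO) (s t : Wobj W X), le s t -> le_fin (supp W s) (supp W t).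

Definition kruskal_fp (W : PO_dilator) (X Z : PO)
    (iota : X -> Z) (kappa : Wobj W Z -> Z) : Prop :=
  (forall x s, iota x <> kappa s) /\
  (forall x y : X, le (iota x) (iota y) -> le x y) /\
  (forall (x : X) (t : Wobj W Z),
      le (iota x) (kappa t) <-> le_fin1 (iota x) (supp W t)) /\
  (forall (s : Wobj W Z) (y : X), ~ le (kappa s) (iota y)) /\
  (forall s t : Wobj W Z,
      le (kappa s) (kappa t) <-> (le s t \/ le_fin1 (kappa s) (supp W t))).

Definition fp_hom (W : PO_dilator) (X Z Z' : PO)
    (iota : X -> Z) (kappa : Wobj W Z -> Z)
    (iota' : X -> Z') (kappa' : Wobj W Z' -> Z') (f : qemb Z Z') : Prop :=
  (forall x, f (iota x) = iota' x) /\
  (forall s, f (kappa s) = kappa' (Wmap W f s)).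

Definition initial_kruskal_fp (W : PO_dilator) (X Z : PO)
    (iota : X -> Z) (kappa : Wobj W Z -> Z) : Prop :=
  kruskal_fp W X Z iota kappa /\
  forall (Z' : PO) (iota' : X -> Z') (kappa' : Wobj W Z' -> Z'),
    kruskal_fp W X Z' iota' kappa' ->
    exists f : qemb Z Z',
      fp_hom W X Z Z' iota kappa iota' kappa' f /\
      forall g : qemb Z Z', fp_hom W X Z Z' iota kappa iota' kappa' g ->
        forall z, g z = f z.

From Stdlib Require Import ProofIrrelevance.

(* Initiality yields an induction principle: a subset of Z containing every
   iota x and every kappa s with support inside it is itself a Kruskal fixed
   point, so the unique morphism out of Z factors through it.  By this
   induction on w, f is monotone on the down-set of w.  The one delicate case
   is kappa r <= kappa s <= kappa t with r <= s, which needs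
   W(f) r <= W(f) s: by normality supp r and supp s lie in the down-set of
   supp t, on which f is an embedding by induction, and W maps embeddings to
   embeddings. *)

Definition subPO (Z : PO) (S : Z -> Prop) : PO.
Proof.
  refine {| carrier := {z : Z | S z};
            le := fun a b => le (proj1_sig a) (proj1_sig b) |}.
  - intros; apply le_refl.
  - intros [a Ha] [b Hb] Hab Hba; simpl in *.
    destruct (le_antisym _ a b Hab Hba). f_equal. apply proof_irrelevance.
  - intros a b c; apply le_trans.
Defined.

Definition subPO_incl (Z : PO) (S : Z -> Prop) : qemb (subPO Z S) Z :=
  {| qfun := fun a : subPO Z S => proj1_sig (a : {z : Z | S z});
     qfun_qe := fun _ _ h => h |}.

Lemma subPO_incl_emb (Z : PO) (S : Z -> Prop) : emb (subPO_incl Z S).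
Proof. intros a b; simpl; tauto. Qed.

Lemma le_fin1_supp_Wmap (W : PO_dilator) (Y Y' : PO) (g : qemb Y Y')
    (t : Wobj W Y) (c : Y) (y' : Y') :
  supp W t c -> le y' (g c) -> le_fin1 y' (supp W (Wmap W g t)).
Proof.
  intros Hc Hle ? ->. exists (g c). split; [|exact Hle].
  apply supp_natural. exists c; auto.
Qed.

Lemma le_fin1_supp_incl (W : PO_dilator) (Z : PO) (S : Z -> Prop)
    (u : subPO Z S) (t : Wobj W (subPO Z S)) :
  le_fin1 u (supp W t) <->
  le_fin1 (proj1_sig u) (supp W (Wmap W (subPO_incl Z S) t)).
Proof.
  split.
  - intros H. destruct (H u eq_refl) as [c [Hc Hle]].
    exact (le_fin1_supp_Wmap W _ _ (subPO_incl Z S) t c _ Hc Hle).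
  - intros H ? ->. destruct (H _ eq_refl) as [c [Hc Hle]].
    apply supp_natural in Hc. destruct Hc as [c' [Hc' <-]].
    exists c'; auto.
Qed.

(* The inclusion of a subset on which g is monotone is an embedding, and so
   is its composite with g; W preserves both, and supp_range lets s and t
   factor through the subset. *)
Lemma Wmap_mono_on (W : PO_dilator) (Y Y' : PO) (g : qemb Y Y') (P : Y -> Prop) :
  (forall a b, P a -> P b -> le a b -> le (g a) (g b)) ->
  forall s t : Wobj W Y,
  (forall y, supp W s y -> P y) -> (forall y, supp W t y -> P y) ->
  le s t -> le (Wmap W g s) (Wmap W g t).
Proof.
  intros Hg s t Hs Ht Hst.
  pose (i := subPO_incl Y P).
  destruct (proj2 (supp_range W _ _ i (subPO_incl_emb Y P) s)) as [s0 <-].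
  { intros y Hy. exists (exist _ y (Hs y Hy)). reflexivity. }
  destruct (proj2 (supp_range W _ _ i (subPO_incl_emb Y P) t)) as [t0 <-].
  { intros y Hy. exists (exist _ y (Ht y Hy)). reflexivity. }
  assert (Hgi : emb (qcomp g i)).
  { intros [a Ha] [b Hb]; simpl. split; [apply qfun_qe | apply Hg; assumption]. }
  rewrite <- !Wmap_comp.
  apply (Wmap_emb W _ _ _ Hgi), (Wmap_emb W _ _ _ (subPO_incl_emb Y P)), Hst.
Qed.

Section Restriction.

Variables (W : PO_dilator) (X Z : PO) (iota : X -> Z) (kappa : Wobj W Z -> Z).
Variable S : Z -> Prop.
Hypothesis S_iota : forall x, S (iota x).
Hypothesis S_kappa : forall s, (forall z, supp W s z -> S z) -> S (kappa s).

Definition iota_restrict (x : X) : subPO Z S := exist _ (iota x) (S_iota x).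

Lemma S_kappa_incl (s : Wobj W (subPO Z S)) :
  S (kappa (Wmap W (subPO_incl Z S) s)).
Proof.
  apply S_kappa. intros z Hz. apply supp_natural in Hz.
  destruct Hz as [y [_ <-]]. exact (proj2_sig y).
Qed.

Definition kappa_restrict (s : Wobj W (subPO Z S)) : subPO Z S :=
  exist _ (kappa (Wmap W (subPO_incl Z S) s)) (S_kappa_incl s).

Lemma kruskal_fp_restrict :
  kruskal_fp W X Z iota kappa ->
  kruskal_fp W X (subPO Z S) iota_restrict kappa_restrict.
Proof.
  intros (K1 & K2 & K3 & K4 & K5).
  split; [|split; [|split; [|split]]].
  - intros x s E. exact (K1 _ _ (f_equal (@proj1_sig _ _) E)).
  - intros x y. apply K2.
  - intros x t. rewrite le_fin1_supp_incl. apply K3.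
  - intros s y. apply K4.
  - intros s t. rewrite le_fin1_supp_incl. simpl.
    rewrite K5, (Wmap_emb W _ _ _ (subPO_incl_emb Z S) s t). tauto.
Qed.

End Restriction.

Section InitialFixedPoint.

Variables (W : PO_dilator) (X Z : PO) (iota : X -> Z) (kappa : Wobj W Z -> Z).
Hypothesis HI : initial_kruskal_fp W X Z iota kappa.

(* Both the identity and the inclusion composed with the map into the
   restriction are morphisms Z -> Z, so they agree by uniqueness. *)
Lemma initial_kruskal_fp_ind (S : Z -> Prop) :
  (forall x, S (iota x)) ->
  (forall s, (forall z, supp W s z -> S z) -> S (kappa s)) ->
  forall z, S z.
Proof.
  intros S_iota S_kappa z.
  destruct HI as [HK Hinit].
  destruct (Hinit _ _ _ (kruskal_fp_restrict W X Z iota kappa S S_iota S_kappa HK))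
    as [g [[g_iota g_kappa] _]].
  destruct (Hinit _ _ _ HK) as [h [_ h_unique]].
  assert (E_incl : qcomp (subPO_incl Z S) g z = h z).
  { apply h_unique. split.
    - intros x. simpl. rewrite g_iota. reflexivity.
    - intros s. simpl. rewrite g_kappa. simpl. rewrite <- Wmap_comp. reflexivity. }
  assert (E_id : qid Z z = h z).
  { apply h_unique. split.
    - reflexivity.
    - intros s. simpl. rewrite Wmap_id. reflexivity. }
  simpl in E_incl, E_id. rewrite <- E_id in E_incl. rewrite <- E_incl.
  exact (proj2_sig (g z)).
Qed.

Lemma initial_kruskal_fp_cases (z : Z) :
  (exists x, z = iota x) \/ (exists s, z = kappa s).
Proof.
  revert z. apply initial_kruskal_fp_ind.
  - intros x. left. exists x. reflexivity.
  - intros s _. right. exists s. reflexivity.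
Qed.

Variables (Z' : PO) (iota' : X -> Z') (kappa' : Wobj W Z' -> Z') (f : qemb Z Z').
Hypothesis HN : normal W.
Hypothesis HK' : kruskal_fp W X Z' iota' kappa'.
Hypothesis Hf : fp_hom W X Z Z' iota kappa iota' kappa' f.
Hypothesis iota'_mono : forall x y : X, le x y -> le (iota' x) (iota' y).

Definition mono_below (w : Z) : Prop :=
  forall a b : Z, le a b -> le b w -> le (f a) (f b).

Definition below_supp (t : Wobj W Z) (z : Z) : Prop :=
  exists c, supp W t c /\ le z c.

Lemma mono_below_iota (y : X) : mono_below (iota y).
Proof.
  destruct HI as [(_ & K2 & _ & K4 & _) _]. destruct Hf as [f_iota _].
  intros a b Hab Hb.
  destruct (initial_kruskal_fp_cases b) as [[y' ->] | [s ->]];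
    [|destruct (K4 _ _ Hb)].
  destruct (initial_kruskal_fp_cases a) as [[x ->] | [r ->]];
    [|destruct (K4 _ _ Hab)].
  rewrite !f_iota. apply iota'_mono, K2, Hab.
Qed.

Lemma f_le_below_kappa (t : Wobj W Z) :
  (forall c, supp W t c -> mono_below c) ->
  forall a, le a (kappa t) -> le (f a) (f (kappa t)).
Proof.
  destruct HI as [(_ & _ & K3 & _ & K5) _].
  destruct HK' as (_ & _ & L3 & _ & L5). destruct Hf as [f_iota f_kappa].
  intros IH a Ha.
  destruct (initial_kruskal_fp_cases a) as [[x ->] | [r ->]].
  - destruct (proj1 (K3 x t) Ha _ eq_refl) as [c [Hc Hxc]].
    pose proof (IH c Hc _ _ Hxc (le_refl _ c)) as Hfxc.
    rewrite f_iota in *. rewrite f_kappa.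
    exact (proj2 (L3 _ _) (le_fin1_supp_Wmap W _ _ f t c _ Hc Hfxc)).
  - rewrite !f_kappa. apply L5.
    destruct (proj1 (K5 r t) Ha) as [Hrt | Hr].
    + left. apply (Wmap_mono_on W _ _ f (below_supp t)).
      * intros u v _ [c [Hc Hvc]] Huv. exact (IH c Hc u v Huv Hvc).
      * intros u Hu. exact (HN _ _ _ Hrt u Hu).
      * intros u Hu. exists u. split; [exact Hu | apply le_refl].
      * exact Hrt.
    + right. destruct (Hr _ eq_refl) as [c [Hc Hrc]].
      pose proof (IH c Hc _ _ Hrc (le_refl _ c)) as Hfrc.
      rewrite f_kappa in Hfrc.
      exact (le_fin1_supp_Wmap W _ _ f t c _ Hc Hfrc).
Qed.

Lemma mono_below_kappa (t : Wobj W Z) :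
  (forall c, supp W t c -> mono_below c) -> mono_below (kappa t).
Proof.
  destruct HI as [(_ & _ & _ & _ & K5) _].
  intros IH a b Hab Hb.
  destruct (initial_kruskal_fp_cases b) as [[y ->] | [s ->]].
  - exact (mono_below_iota y a _ Hab (le_refl _ _)).
  - destruct (proj1 (K5 s t) Hb) as [Hst | Hs].
    + apply f_le_below_kappa; [|exact Hab].
      intros c Hc u v Huv Hvc.
      destruct (HN _ _ _ Hst c Hc) as [d [Hd Hcd]].
      exact (IH d Hd u v Huv (le_trans _ _ _ _ Hvc Hcd)).
    + destruct (Hs _ eq_refl) as [c [Hc Hsc]].
      exact (IH c Hc a _ Hab Hsc).
Qed.

Lemma f_emb : emb f.
Proof.
  intros a b. split; [apply qfun_qe|].
  intros Hab.
  apply (initial_kruskal_fp_ind mono_below mono_below_iota mono_below_kappa b);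
    [exact Hab | apply le_refl].
Qed.

End InitialFixedPoint.

Theorem lemma3p7 (W : PO_dilator) (X Z : PO)
    (iota : X -> Z) (kappa : Wobj W Z -> Z)
    (Z' : PO) (iota' : X -> Z') (kappa' : Wobj W Z' -> Z')
    (f : qemb Z Z') :
  normal W ->
  initial_kruskal_fp W X Z iota kappa ->
  kruskal_fp W X Z' iota' kappa' ->
  fp_hom W X Z Z' iota kappa iota' kappa' f ->
  (forall x y : X, le x y -> le (iota' x) (iota' y)) ->
  emb f.
Proof.
  intros HN HI HK' Hf iota'_mono.
  exact (f_emb W X Z iota kappa HI Z' iota' kappa' f HN HK' Hf iota'_mono).
Qed.
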